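(* Let $M$ be a matroid with ground set $E(M)$, let $\Gamma$ be an abelian group and let $\psi\colon E(M)\to\Gamma$ be a labeling. The following are equivalent: (i) all bases of $M$ have the same label; (ii) $M$ has a basis $B$ such that $\psi(B')=\psi(B)$ for every basis $B'$ of $M$ with $|B\setminus B'|\le 1$; (iii) $\psi$ is constant on each connected component of $M$.
   Context: All groups are abelian and written additively. For a labeling $\psi\colon E\to\Gamma$ and $S\subseteq E$, $\psi(S):=\sum_{x\in S}\psi(x)$ is the label of $S$. The connected components of a matroid are the classes of the equivalence relation on $E(M)$ in which $x\sim y$ iff $x=y$ or $x$ and $y$ lie in a common circuit. *)

From mathcomp Require Import all_boot all_order all_algebra.
Set Implicit Arguments. Unset Strict Implicit. Unset Printing Implicit Defensive.
Import GRing.Theory.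
Local Open Scope ring_scope.

Definition base_exchange (T : finType) (BB : {set {set T}}) : Prop :=
  forall B1 B2, B1 \in BB -> B2 \in BB ->
  forall x, x \in B1 :\: B2 ->
  exists2 y, y \in B2 :\: B1 & (y |: (B1 :\ x)) \in BB.

(* A matroid with ground set T (the whole finType), given by its bases. *)
Record matroid (T : finType) := Matroid {
  bases : {set {set T}};
  bases_nonempty : bases != set0;
  bases_exchange : base_exchange bases }.

Definition indep (T : finType) (M : matroid T) (I : {set T}) : Prop :=
  exists2 B, B \in bases M & I \subset B.

Definition circuit (T : finType) (M : matroid T) (C : {set T}) : Prop :=
  ~ indep M C /\ (forall D : {set T}, D \proper C -> indep M D).

(* x ~ y iff x = y or x, y lie in a common circuit; components are its classes *)
Definition comp_rel (T : finType) (M : matroid T) (x y : T) : Prop :=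
  x = y \/ exists C, circuit M C /\ x \in C /\ y \in C.

Definition const_on_components (T : finType) (G : zmodType) (M : matroid T)
  (psi : T -> G) : Prop :=
  forall x y, comp_rel M x y -> psi x = psi y.

Definition label (T : finType) (G : zmodType) (psi : T -> G) (S : {set T}) : G :=
  \sum_(x in S) psi x.

(* (iii) => (i): in a basis exchange B - x + y the elements x and y lie in a
   common circuit (inside y + B), so labels agree along exchanges, and any two
   bases are joined by a sequence of exchanges.
   (i) => (iii): for x <> y in a circuit C, extend C - y to a basis B2 inside
   (C - y) + B1, where B1 is a basis containing C - x; then B1 \ B2 = {y} and
   B2 \ B1 = {x}, so equal labels force psi x = psi y.
   (ii) => (i): by (ii) every single exchange at B swaps two elements with the
   same psi-value, so each fibre K of psi is closed under exchanges at B. For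
   such K, |B' :&: K| <= |B :&: K| for every basis B' (exchanging an element of
   B' \ B outside K never decreases the left side), the complement of K gives
   the reverse inequality, and the label of a basis is determined by these
   fibre counts. *)
From mathcomp Require Import all_boot all_order all_algebra.
From mathcomp Require Import zify.
Import GRing.Theory.
Set Implicit Arguments. Unset Strict Implicit. Unset Printing Implicit Defensive.

Lemma card_exchange_setD (T : finType) (B1 B2 : {set T}) x y :
  x \in B1 -> x \notin B2 -> y \in B2 ->
  #|(y |: (B1 :\ x)) :\: B2| < #|B1 :\: B2|.
Proof.
move=> xB1 xB2 yB2.
have -> : (y |: (B1 :\ x)) :\: B2 = (B1 :\: B2) :\ x.
  apply/setP=> z; rewrite !inE.
  by case: (z =P y) => [->|_]; [rewrite yB2 !andbF | rewrite andbCA].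
by rewrite [#|B1 :\: B2|](cardsD1 x) inE xB1 xB2.
Qed.

Section MatroidBases.

Variables (T : finType) (M : matroid T).
Implicit Types (B I C D K : {set T}).

Lemma bases_subset_eq B1 B2 :
  B1 \in bases M -> B2 \in bases M -> B1 \subset B2 -> B1 = B2.
Proof.
move=> b1 b2 s12; apply/eqP; rewrite eqEsubset s12 /=.
apply/subsetP=> x xB2; apply/negPn/negP=> xB1.
have [|y] := bases_exchange b2 b1 (x := x); first by rewrite inE xB1 xB2.
by move=> /setDP[/(subsetP s12)->].
Qed.

Lemma bases_ind (P : {set T} -> Prop) B2 :
  B2 \in bases M -> P B2 ->
  (forall B1 x y, B1 \in bases M -> x \in B1 -> x \notin B2 -> y \in B2 ->
     y \notin B1 -> y |: (B1 :\ x) \in bases M -> P (y |: (B1 :\ x)) -> P B1) ->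
  forall B1, B1 \in bases M -> P B1.
Proof.
move=> b2 P2 step B1; have [n] := ubnP #|B1 :\: B2|.
elim: n B1 => // n IH B1 hn b1.
have [|/set0Pn[x xD]] := boolP (B1 :\: B2 == set0).
  by rewrite setD_eq0 => /(bases_subset_eq b1 b2) ->.
have [y yD b3] := bases_exchange b1 b2 xD.
move: xD yD; rewrite !inE => /andP[xB2 xB1] /andP[yB1 yB2].
apply: (step B1 x y) => //; apply: IH => //.
exact: leq_trans (card_exchange_setD xB1 xB2 yB2) hn.
Qed.

Lemma card_bases B1 B2 :
  B1 \in bases M -> B2 \in bases M -> #|B1| = #|B2|.
Proof.
move=> b1 b2; apply: (bases_ind (P := fun B => #|B| = #|B2|) b2) b1 => //.
move=> B x y _ xB _ _ yB _ <-.
by rewrite cardsU1 !inE (negbTE yB) andbF [#|B|](cardsD1 x) xB.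
Qed.

Lemma card_bases_setD B1 B2 :
  B1 \in bases M -> B2 \in bases M -> #|B1 :\: B2| = #|B2 :\: B1|.
Proof.
move=> b1 b2; have := card_bases b1 b2.
rewrite -(cardsID B2 B1) -(cardsID B1 B2) setIC; lia.
Qed.

Definition indepb I := [exists B in bases M, I \subset B].

Lemma indepP I : reflect (indep M I) (indepb I).
Proof.
apply: (iffP existsP) => [[B /andP[bB sB]]|[B bB sB]]; first by exists B.
by exists B; rewrite bB sB.
Qed.

Lemma dependent_circuit D :
  ~ indep M D -> exists2 C : {set T}, C \subset D & circuit M C.
Proof.
move=> Ddep; pose Q (C : {set T}) := (C \subset D) && ~~ indepb C.
have QD : Q D by rewrite /Q subxx; apply/indepP.
case: (arg_minnP (fun C : {set T} => #|C|) QD) => C /andP[CD /indepP Cdep] Cmin.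
exists C => //; split=> // C' C'C; have [/indepP//|C'dep] := boolP (indepb C').
have := Cmin C'; rewrite /Q C'dep (subset_trans (proper_sub C'C) CD) => /(_ isT).
by rewrite leqNgt proper_card.
Qed.

Lemma indep_subset_base I : indep M I -> forall B1, B1 \in bases M ->
  exists2 B2, B2 \in bases M & (I \subset B2) && (B2 \subset I :|: B1).
Proof.
move=> [B0 b0 sI0] B1 b1.
pose Q (B : {set T}) := (B \in bases M) && (I \subset B).
have QB0 : Q B0 by rewrite /Q b0 sI0.
case: (arg_minnP (fun B : {set T} => #|B :\: B1|) QB0) => B2 /andP[b2 sI2] B2min.
exists B2; rewrite // sI2; apply/subsetP=> z zB2; rewrite inE.
apply/negPn/norP=> -[zI zB1].
have [|w wD b3] := bases_exchange b2 b1 (x := z); first by rewrite inE zB1.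
move: wD; rewrite inE => /andP[wB2 wB1].
have : Q (w |: (B2 :\ z)).
  rewrite /Q b3; apply/subsetP=> i iI; rewrite !inE (subsetP sI2) //.
  by rewrite andbT orbC; apply/orP; left; apply: contraNneq zI => <-.
by move/B2min; rewrite leqNgt card_exchange_setD.
Qed.

Lemma circuit_not_subset_base C B :
  circuit M C -> B \in bases M -> ~ C \subset B.
Proof. by move=> [Cdep _] bB sCB; apply: Cdep; exists B. Qed.

Lemma circuit_exchange_bases C x y :
  circuit M C -> x \in C -> y \in C -> x != y ->
  exists B1, exists2 B2, B1 \in bases M /\ B2 \in bases M &
    B1 :\: B2 = [set y] /\ B2 :\: B1 = [set x].
Proof.
move=> Ccirc xC yC nxy; have [_ Cmin] := Ccirc.
have [B1 b1 sC1] := Cmin _ (properD1 xC).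
have [B2 b2 /andP[sC2 s2]] := indep_subset_base (Cmin _ (properD1 yC)) b1.
have outside B z : B \in bases M -> C :\ z \subset B -> z \in C -> z \notin B.
  move=> bB sCB zC; apply/negP=> zB; apply: circuit_not_subset_base Ccirc bB _.
  by rewrite -(setD1K zC) subUset sub1set zB.
have xB2 : x \in B2 by rewrite (subsetP sC2) // !inE nxy.
have yB1 : y \in B1 by rewrite (subsetP sC1) // !inE eq_sym nxy.
have xB1 : x \notin B1 by apply: outside.
have yB2 : y \notin B2 by apply: outside.
have D21 : B2 :\: B1 = [set x].
  apply/setP=> z; rewrite !inE; apply/andP/eqP=> [[zB1 zB2]|->]; last by [].
  have := subsetP s2 z zB2; rewrite !inE (negbTE zB1) orbF => /andP[_ zC].
  by apply/eqP; apply: contraNT zB1 => nzx; rewrite (subsetP sC1) // !inE nzx.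
exists B1, B2 => //; split=> //.
have /cards1P[u Du] : #|B1 :\: B2| == 1.
  by rewrite (card_bases_setD b1 b2) D21 cards1.
have : y \in B1 :\: B2 by rewrite inE yB1 yB2.
by rewrite Du inE => /eqP <-.
Qed.

Lemma exchange_circuit B x y :
  B \in bases M -> x \in B -> y \notin B -> y |: (B :\ x) \in bases M ->
  exists2 C, circuit M C & x \in C /\ y \in C.
Proof.
move=> bB xB yB bB'.
have [|C CyB Ccirc] := dependent_circuit (D := y |: B).
  move=> [B0 b0 sB0].
  have eB : B = B0.
    exact: bases_subset_eq bB b0 (subset_trans (subsetUr _ _) sB0).
  by move: yB; rewrite eB (subsetP sB0) // setU11.
have inC z B0 : B0 \in bases M -> C :\ z \subset B0 -> z \in C.
  move=> b0 sCB0; apply: contra_notT (circuit_not_subset_base Ccirc b0) => zC.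
  apply: subset_trans sCB0; apply/subsetP=> u uC.
  by rewrite !inE uC andbT; apply: contraNneq zC => <-.
exists C => //; split.
  apply: inC bB' _; apply/subsetP=> u; rewrite !inE => /andP[nux uC].
  by case/setU1P: (subsetP CyB u uC) => [->|uB]; rewrite ?eqxx // nux uB orbT.
apply: inC bB _; apply/subsetP=> u; rewrite !inE => /andP[nuy uC].
by case/setU1P: (subsetP CyB u uC) => // /eqP; rewrite (negbTE nuy).
Qed.

Section ExchangeClosed.

Variables (B : {set T}) (bB : B \in bases M).

Definition exchange_closed K := forall e f, e \notin B -> f \in B ->
  e |: (B :\ f) \in bases M -> (e \in K) = (f \in K).

Lemma exchange_closedC K : exchange_closed K -> exchange_closed (~: K).
Proof. by move=> hK e f eB fB bE; rewrite !inE (hK e f eB fB bE). Qed.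

Lemma card_setI_base_le_sub K B' : exchange_closed K -> B' \in bases M ->
  B' :\: B \subset K -> #|B' :&: K| <= #|B :&: K|.
Proof.
move=> hK bB' sK.
have sK' : B :\: B' \subset K.
  apply/subsetP=> f fD; have [e eD bE] := bases_exchange bB bB' fD.
  move: fD eD; rewrite !inE => /andP[fB' fB] /andP[eB eB'].
  by rewrite -(hK e f eB fB bE) (subsetP sK) // inE eB eB'.
have eqBK : (B :&: K) :\: B' = B :\: B'.
  by rewrite setDE setIAC -setDE; apply/setIidPl.
have leB'K : #|(B' :&: K) :\: B| <= #|B' :\: B|.
  by apply/subset_leq_card/setSD/subsetIl.
have eqI : B' :&: K :&: B = B :&: K :&: B'.
  apply/setP=> z; rewrite !inE.
  by case: (z \in B); case: (z \in B'); case: (z \in K).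
rewrite -(cardsID B (B' :&: K)) -(cardsID B' (B :&: K)) eqBK eqI.
by rewrite -(card_bases_setD bB' bB) leq_add2l.
Qed.

Lemma card_setI_base_le K B' : exchange_closed K -> B' \in bases M ->
  #|B' :&: K| <= #|B :&: K|.
Proof.
move=> hK; have [n] := ubnP #|B' :\: B|; elim: n B' => // n IH B' hn bB'.
have [/existsP[e /andP[eD eK]]|] := boolP [exists e in B' :\: B, e \notin K].
  have [y yD bB''] := bases_exchange bB' bB eD.
  move: eD yD; rewrite !inE => /andP[eB eB'] /andP[yB' yB].
  apply: leq_trans (IH _ _ bB''); last first.
    exact: leq_trans (card_exchange_setD eB' eB yB) hn.
  apply/subset_leq_card/subsetP=> z; rewrite !inE => /andP[zB' zK].
  by rewrite zB' zK !andbT orbC; apply/orP; left; apply: contraNneq eK => <-.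
rewrite negb_exists_in => /forall_inP sK.
by apply: card_setI_base_le_sub => //; apply/subsetP=> e /sK /negPn.
Qed.

Lemma card_setI_base K B' : exchange_closed K -> B' \in bases M ->
  #|B' :&: K| = #|B :&: K|.
Proof.
move=> hK bB'; apply/eqP; rewrite eqn_leq card_setI_base_le //=.
have := card_setI_base_le (exchange_closedC hK) bB'.
rewrite -!setDE -(leq_add2l #|B' :&: K|) cardsID (card_bases bB' bB).
by rewrite -(cardsID K B) leq_add2r.
Qed.

End ExchangeClosed.

End MatroidBases.

Section Labels.

Variables (T : finType) (G : zmodType) (psi : T -> G).
Local Open Scope ring_scope.

Lemma label_exchange (B : {set T}) x y : x \in B -> y \notin B ->
  label psi (y |: (B :\ x)) + psi x = label psi B + psi y.
Proof.
move=> xB yB; rewrite /label big_setU1 /= ?(big_setD1 x xB) /=; last first.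
  by rewrite !inE (negbTE yB) andbF.
by rewrite addrAC [RHS]addrAC (addrC (psi x)).
Qed.

Lemma label_setID (A B : {set T}) :
  label psi A = label psi (A :&: B) + label psi (A :\: B).
Proof. by rewrite /label (big_setID B). Qed.

Definition fiber_rep (x : T) : T := odflt x [pick y | psi y == psi x].

Lemma psi_fiber_rep x : psi (fiber_rep x) = psi x.
Proof. by rewrite /fiber_rep; case: pickP => //= y /eqP. Qed.

Lemma fiber_rep_eq x x' : psi x = psi x' -> fiber_rep x = fiber_rep x'.
Proof.
by move=> e; rewrite /fiber_rep e; case: pickP => [//|/(_ x')]; rewrite eqxx.
Qed.

Lemma label_fiber_rep (S : {set T}) :
  label psi S = \sum_(j : T) psi j *+ #|S :&: [set x | fiber_rep x == j]|.
Proof.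
rewrite /label (partition_big fiber_rep xpredT) //=; apply: eq_bigr => j _.
rewrite -sumr_const; apply: eq_big => [i|i /andP[_ /eqP <-]]; first by rewrite !inE.
by rewrite psi_fiber_rep.
Qed.

End Labels.

Section Equivalences.

Variables (T : finType) (G : zmodType) (M : matroid T) (psi : T -> G).

Definition label_const_on_bases := forall B1 B2,
  B1 \in bases M -> B2 \in bases M -> label psi B1 = label psi B2.

Definition label_const_near_base B := forall B',
  B' \in bases M -> #|B :\: B'| <= 1 -> label psi B' = label psi B.

Lemma label_const_on_bases_near : label_const_on_bases ->
  exists2 B, B \in bases M & label_const_near_base B.
Proof.
move=> hc; have /set0Pn[B bB] := bases_nonempty M.
by exists B => // B' bB' _; apply: hc.
Qed.

Lemma const_on_components_label_bases :
  const_on_components M psi -> label_const_on_bases.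
Proof.
move=> hc B1 B2 b1 b2.
apply: (bases_ind (P := fun B => label psi B = label psi B2) b2) b1 => //.
move=> B x y bB xB _ _ yB bB' <-.
have [C Ccirc [xC yC]] := exchange_circuit bB xB yB bB'.
apply: (addIr (psi x)); rewrite label_exchange // (hc x y) //.
by right; exists C.
Qed.

Lemma label_bases_const_on_components :
  label_const_on_bases -> const_on_components M psi.
Proof.
move=> hc x y [->//|[C [Ccirc [xC yC]]]].
have [->//|nxy] := eqVneq x y.
have [B1 [B2 [b1 b2] [D12 D21]]] := circuit_exchange_bases Ccirc xC yC nxy.
have := hc B1 B2 b1 b2.
rewrite (label_setID psi B1 B2) (label_setID psi B2 B1) D12 D21 setIC.
by rewrite /label !big_set1 => /addrI.
Qed.

Lemma label_const_near_base_bases B : B \in bases M ->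
  label_const_near_base B -> label_const_on_bases.
Proof.
move=> bB hB.
have psi_exchange e f : e \notin B -> f \in B -> e |: (B :\ f) \in bases M ->
    psi e = psi f.
  move=> eB fB bE; apply: (@addrI _ (label psi B)).
  rewrite -(label_exchange psi fB eB) hB //.
  rewrite -(cards1 f); apply/subset_leq_card/subsetP=> z; rewrite !inE.
  by case: (z =P f) => //= _; case: (z \in B); rewrite ?orbT ?andbF.
suff label_base B1 : B1 \in bases M -> label psi B1 = label psi B.
  by move=> B1 B2 /label_base-> /label_base->.
move=> b1; rewrite !label_fiber_rep; apply: eq_bigr => j _; congr (_ *+ _)%R.
apply: (card_setI_base bB) => // e f eB fB bE.
by rewrite !inE (fiber_rep_eq (psi_exchange e f eB fB bE)).
Qed.

End Equivalences.

Theorem theorem3p1 (T : finType) (G : zmodType) (M : matroid T) (psi : T -> G) :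
  ((forall B1 B2, B1 \in bases M -> B2 \in bases M ->
      label psi B1 = label psi B2)
   <->
   (exists2 B, B \in bases M &
      forall B', B' \in bases M -> #|B :\: B'| <= 1 ->
        label psi B' = label psi B))
  /\
  ((exists2 B, B \in bases M &
      forall B', B' \in bases M -> #|B :\: B'| <= 1 ->
        label psi B' = label psi B)
   <->
   const_on_components M psi).
Proof.
have near_bases : (exists2 B, B \in bases M & label_const_near_base M psi B) ->
    label_const_on_bases M psi.
  by case=> B; apply: label_const_near_base_bases.
split; split.
- exact: label_const_on_bases_near.
- exact: near_bases.
- by move/near_bases; apply: label_bases_const_on_components.
- by move/const_on_components_label_bases; apply: label_const_on_bases_near.
Qed.
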